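(* Let $\mathcal{M}$, $\pi_b$, $\pi_e$ be as in the context, and assume the reward decomposition (R), the transition factorisation (P), the policy factorisation (F) for both $\pi_b$ and $\pi_e$, and factor-wise absolute continuity (AC). Let $\mathcal{D}=\{\tau^{(n)}\}_{n=1}^N$ consist of $N$ independent trajectories generated by $\pi_b$. Then the decomposed IS estimator $$\hat Q^{DecIS}_{\pi_e}=\sum_{d=1}^{D}\frac1N\sum_{n=1}^N\sum_{t=0}^{T}\gamma^t\,\rho^{(n),d}_{0:T}\,r^d(z^{(n),d}_t,a^{(n),d}_t)$$ and the decomposed per-decision IS estimator $$\hat Q^{DecPDIS}_{\pi_e}=\sum_{d=1}^{D}\frac1N\sum_{n=1}^N\sum_{t=0}^{T}\gamma^t\,\rho^{(n),d}_{0:t}\,r^d(z^{(n),d}_t,a^{(n),d}_t)$$ are both unbiased estimators of $V_{\pi_e}=\mathbb{E}_{\pi_e}\big[\sum_{t=0}^T\gamma^t r(s_t,a_t)\big]$, i.e. $\mathbb{E}_{\pi_b}[\hat Q^{DecIS}_{\pi_e}]=\mathbb{E}_{\pi_b}[\hat Q^{DecPDIS}_{\pi_e}]=V_{\pi_e}$.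
   Context: A finite-horizon MDP has finite state space $\mathcal{S}$, action space $\mathcal{A}=\mathcal{A}^1\times\cdots\times\mathcal{A}^D$ (finite), so each action is $a=(a^1,\dots,a^D)$ with $a^d\in\mathcal{A}^d$; transition kernel $p(\cdot\mid s,a)$, a deterministic reward function $r:\mathcal{S}\times\mathcal{A}\to\mathbb{R}$, initial state distribution $d_1$, discount $\gamma\in[0,1]$ and horizon $T$. A (stationary) policy $\pi$ gives a distribution $\pi(\cdot\mid s)$ on $\mathcal{A}$. A trajectory under $\pi$ is $s_0\sim d_1$, $a_t\sim\pi(\cdot\mid s_t)$, $s_{t+1}\sim p(\cdot\mid s_t,a_t)$ for $t=0,\dots,T$; $\mathbb{E}_\pi$ denotes expectation over such trajectories. There is a state abstraction map $\phi(s)=(z^1,\dots,z^D)$ with $z^d\in\mathcal{Z}^d$ (finite), and we write $z^d_t$ for the $d$-th component of $\phi(s_t)$. Standing factorisation assumptions: (R) $r(s,a)=\sum_{d=1}^D r^d(z^d,a^d)$ for functions $r^d:\mathcal{Z}^d\times\mathcal{A}^d\to\mathbb{R}$, where $\phi(s)=(z^1,\dots,z^D)$; (P) for all $s,s',a$: $\sum_{\tilde s\in\phi^{-1}(\phi(s'))}p(\tilde s\mid s,a)=\prod_{d=1}^D p^d(z'^d\mid z^d,a^d)$ for sub-transition kernels $p^d$ on $\mathcal{Z}^d$, where $\phi(s')=(z'^1,\dots,z'^D)$; (F) a policy $\pi$ is factored if $\pi(a\mid s)=\prod_{d=1}^D\pi^d(a^d\mid z^d)$ for sub-policies $\pi^d(\cdot\mid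 z^d)$ on $\mathcal{A}^d$. (AC) For all $d$, $z^d$, $a^d$: if $\pi_b^d(a^d\mid z^d)=0$ then $\pi_e^d(a^d\mid z^d)=0$. For trajectory $n$ with sub-actions $a^{(n),d}_t$ and abstract states $z^{(n),d}_t$, the factor-$d$ importance ratio is $\rho^{(n),d}_{0:t}=\prod_{t'=0}^{t}\frac{\pi_e^d(a^{(n),d}_{t'}\mid z^{(n),d}_{t'})}{\pi_b^d(a^{(n),d}_{t'}\mid z^{(n),d}_{t'})}$. *)

From HB Require Import structures.
From mathcomp Require Import all_boot all_order all_algebra.
Set Implicit Arguments. Unset Strict Implicit. Unset Printing Implicit Defensive.
Import Order.TTheory GRing.Theory Num.Theory.
Local Open Scope ring_scope.

(* A finite-horizon factored MDP.
   - S : finite state space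
   - D factors; sub-action spaces Ad d, abstract sub-state spaces Zd d
   - an action is a dependent finite function a : {dffun forall d, Ad d}
   - phi s : {dffun forall d, Zd d} is the state abstraction
   - a trajectory (s_0,a_0,...,s_T,a_T) is a finite function 'I_T.+1 -> S * action *)

Definition action (D : nat) (Ad : 'I_D -> finType) := {dffun forall d : 'I_D, Ad d}.
Definition abstr (D : nat) (Zd : 'I_D -> finType) := {dffun forall d : 'I_D, Zd d}.
Definition traj (S : finType) (D : nat) (Ad : 'I_D -> finType) (T : nat) :=
  {ffun 'I_T.+1 -> (S * action Ad)%type}.

Section MDP.
Variables (R : realFieldType) (S : finType) (D : nat) (Ad Zd : 'I_D -> finType) (T : nat).

Definition st (tau : traj S Ad T) (t : nat) : S := (tau (inord t)).1.
Definition ac (tau : traj S Ad T) (t : nat) : action Ad := (tau (inord t)).2.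

Definition is_distr (X : finType) (f : X -> R) :=
  (forall x, 0 <= f x) /\ \sum_(x : X) f x = 1.

(* probability of the trajectory (s_0,a_0,...,s_T,a_T) under policy pi:
   d1(s_0) prod_{t=0}^T pi(a_t|s_t) prod_{t=0}^{T-1} p(s_{t+1}|s_t,a_t).
   (s_{T+1} is marginalized out; it does not affect any quantity below.) *)
Definition traj_prob (d1 : S -> R) (p : S -> action Ad -> S -> R)
  (pi : S -> action Ad -> R) (tau : traj S Ad T) : R :=
  d1 (st tau 0) * (\prod_(t < T.+1) pi (st tau t) (ac tau t))
  * \prod_(t < T) p (st tau t) (ac tau t) (st tau t.+1).

Definition Etraj d1 p pi (f : traj S Ad T -> R) : R :=
  \sum_(tau : traj S Ad T) traj_prob d1 p pi tau * f tau.

Definition Edata (N : nat) d1 p pi (f : {ffun 'I_N -> traj S Ad T} -> R) : R :=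
  \sum_(data : {ffun 'I_N -> traj S Ad T})
     (\prod_(n < N) traj_prob d1 p pi (data n)) * f data.

Definition value d1 p pi (r : S -> action Ad -> R) (gamma : R) : R :=
  Etraj d1 p pi (fun tau => \sum_(t < T.+1) gamma ^+ t * r (st tau t) (ac tau t)).

Definition rho (phi : S -> abstr Zd)
  (pie pib : forall d : 'I_D, Zd d -> Ad d -> R) (d : 'I_D) (tau : traj S Ad T) (t : nat) : R :=
  \prod_(t' < t.+1)
     (pie d (phi (st tau t') d) (ac tau t' d) / pib d (phi (st tau t') d) (ac tau t' d)).

Definition QDecIS (N : nat) phi pie pib (rd : forall d : 'I_D, Zd d -> Ad d -> R) (gamma : R)
  (data : {ffun 'I_N -> traj S Ad T}) : R :=
  \sum_(d < D) (N%:R)^-1 * \sum_(n < N) \sum_(t < T.+1)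
     gamma ^+ t * rho phi pie pib d (data n) T
       * rd d (phi (st (data n) t) d) (ac (data n) t d).

Definition QDecPDIS (N : nat) phi pie pib (rd : forall d : 'I_D, Zd d -> Ad d -> R) (gamma : R)
  (data : {ffun 'I_N -> traj S Ad T}) : R :=
  \sum_(d < D) (N%:R)^-1 * \sum_(n < N) \sum_(t < T.+1)
     gamma ^+ t * rho phi pie pib d (data n) t
       * rd d (phi (st (data n) t) d) (ac (data n) t d).

End MDP.

(* Fix a factor d and times t <= k <= T.  A trajectory under a policy, with an
   extra multiplicative weight at each step, is a path of an unnormalised
   Markov chain on state-action pairs x = (s, a).  Reweighting the behaviour
   chain by the factor-d ratios up to time k, and the unweighted evaluation
   chain, both "lump" onto one and the same chain of the d-th factor
   (z^d, a^d) up to time k: by (P) and (F) the next (z^d, a^d) only depends on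
   the current (z^d, a^d), and by (AC) the ratio turns pi_b^d into pi_e^d.
   Hence E_b[rho^d_{0:k} f(z^d_t, a^d_t)] = E_e[f(z^d_t, a^d_t)]
   (importance_weighting).  Summing over d and t with (R), and averaging over
   N i.i.d. trajectories, gives the theorem for k = T (DecIS) and k = t
   (DecPDIS). *)

From HB Require Import structures.
From mathcomp Require Import all_boot all_order all_algebra.
From mathcomp Require Import ring.
Import Order.TTheory GRing.Theory Num.Theory.
Local Open Scope ring_scope.

Section ProductSums.
Variable R : comNzRingType.

Lemma big_dffun_distr (I : finType) (U : I -> finType) (F : forall i, U i -> R) :
  \prod_i \sum_(x : U i) F i x = \sum_(a : {dffun forall i, U i}) \prod_i F i (a i).
Proof.
transitivity (\prod_i \sum_(j in tagged_with U i) untag 0 (F i) j).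
  by apply: eq_bigr => i _; rewrite (big_tag F i).
rewrite bigA_distr_big_dep.
pose P_ i := [ffun x : U i => F i x].
transitivity (\sum_(t : fprod U) \prod_(i in I) P_ i (t i)); last first.
  rewrite (reindex (@dffun_of_fprod _ U)); last exact/onW_bij/dffun_of_fprod_bij.
  by apply: eq_bigr => t _; apply: eq_bigr => i _; rewrite /P_ !ffunE.
rewrite big_fprod; apply: eq_bigr => g _; apply: eq_bigr => i _.
rewrite /untag; case: (g i) => j x /=; case: eqP => // e.
by rewrite /P_ ffunE.
Qed.

Lemma marginal_product (I : finType) (U : I -> finType) (f : forall i, U i -> R)
    (i0 : I) (h : U i0 -> R) :
  (forall i, i != i0 -> \sum_(x : U i) f i x = 1) ->
  \sum_(a : {dffun forall i, U i}) (\prod_i f i (a i)) * h (a i0)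
  = \sum_(x : U i0) f i0 x * h x.
Proof.
move=> mass1.
have untag_h (x : U i0) : untag 1 h (Tagged U x) = h x.
  by rewrite (@untagE _ U _ 1 i0 h (Tagged U x) (erefl i0)).
pose g i (y : U i) := f i y * untag 1 h (Tagged U y).
rewrite (eq_bigr (fun a : {dffun forall i, U i} => \prod_i g i (a i))); last first.
  move=> a _; rewrite /g big_split /=; congr (_ * _).
  rewrite (bigD1 i0) //= untag_h big1 ?mulr1 // => i hi.
  by rewrite untag_dflt.
rewrite -big_dffun_distr (bigD1 i0) //= [X in _ * X]big1 ?mulr1.
  by apply: eq_bigr => x _; rewrite /g untag_h.
move=> i hi; rewrite -(mass1 i hi); apply: eq_bigr => x _.
by rewrite /g untag_dflt ?mulr1.
Qed.

End ProductSums.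

Arguments big_dffun_distr {R I U}.
Arguments marginal_product {R I U}.

Section Chains.
Variables (R : comNzRingType) (X : finType).

Definition path_at {n} (f : {ffun 'I_n.+1 -> X}) (t : nat) : X := f (inord t).

Definition path_weight (mu : X -> R) (K : nat -> X -> X -> R) n (q : nat -> X) : R :=
  mu (q 0%N) * \prod_(t < n) K t (q t) (q t.+1).

Fixpoint marginal (mu : X -> R) (K : nat -> X -> X -> R) n : X -> R :=
  if n is m.+1 then fun y => \sum_x marginal mu K m x * K m x y else mu.

Definition extend {n} (g : {ffun 'I_n.+1 -> X}) (y : X) : {ffun 'I_n.+2 -> X} :=
  [ffun i : 'I_n.+2 => if (i < n.+1)%N then g (inord i) else y].

Lemma path_at_extend n (g : {ffun 'I_n.+1 -> X}) y t :
  (t <= n)%N -> path_at (extend g y) t = path_at g t.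
Proof.
by move=> ht; rewrite /path_at ffunE inordK ?ltnS ?ht // ltnW.
Qed.

Lemma path_at_extend_last n (g : {ffun 'I_n.+1 -> X}) y : path_at (extend g y) n.+1 = y.
Proof. by rewrite /path_at ffunE inordK // ltnn. Qed.

Lemma sum_paths_extend n (F : {ffun 'I_n.+2 -> X} -> R) :
  \sum_f F f = \sum_(g : {ffun 'I_n.+1 -> X}) \sum_y F (extend g y).
Proof.
rewrite pair_big /= (reindex (fun q : {ffun 'I_n.+1 -> X} * X => extend q.1 q.2)) //.
exists (fun f : {ffun 'I_n.+2 -> X} => ([ffun i : 'I_n.+1 => f (inord i)], f ord_max)).
  move=> [g y] _; rewrite /extend /=; congr (_, _); last by rewrite ffunE /= ltnn.
  apply/ffunP => i; rewrite !ffunE inordK ?ltn_ord //; last by rewrite ltnS ltnW.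
  by congr (g _); apply/val_inj; rewrite /= inordK.
move=> f _; apply/ffunP => i; rewrite /extend !ffunE /=.
case: ifP => hi; first by congr (f _); apply/val_inj; rewrite /= !inordK.
congr (f _); apply/val_inj => /=.
by have := ltn_ord i; rewrite ltnS leq_eqVlt hi orbF => /eqP.
Qed.

Lemma sum_paths1 (F : {ffun 'I_1 -> X} -> R) : \sum_f F f = \sum_x F [ffun _ => x].
Proof.
rewrite (reindex (fun x : X => [ffun _ : 'I_1 => x])) //.
exists (fun f : {ffun 'I_1 -> X} => f ord0) => [x _|f _]; first by rewrite ffunE.
by apply/ffunP => i; rewrite ffunE; congr (f _); apply/val_inj; case: i => -[].
Qed.

Lemma path_weight_extend mu K n (g : {ffun 'I_n.+1 -> X}) y :
  path_weight mu K n.+1 (path_at (extend g y))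
  = path_weight mu K n (path_at g) * K n (path_at g n) y.
Proof.
rewrite /path_weight big_ord_recr /= path_at_extend_last !path_at_extend // mulrA.
by congr (_ * _ * _); apply: eq_bigr => i _; rewrite !path_at_extend // ltnW.
Qed.

Lemma marginal_step mu K m (h : X -> R) :
  \sum_y marginal mu K m.+1 y * h y = \sum_x marginal mu K m x * \sum_y K m x y * h y.
Proof.
under eq_bigr do rewrite big_distrl.
rewrite exchange_big /=; apply: eq_bigr => x _; rewrite big_distrr /=.
by apply: eq_bigr => y _; rewrite mulrA.
Qed.

Lemma sum_paths_last mu K n (h : X -> R) :
  \sum_(f : {ffun 'I_n.+1 -> X}) path_weight mu K n (path_at f) * h (path_at f n)
  = \sum_x marginal mu K n x * h x.
Proof.
elim: n h => [|n IH] h.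
  by rewrite sum_paths1; apply: eq_bigr => x _; rewrite /path_weight /path_at big_ord0 !ffunE mulr1.
rewrite sum_paths_extend marginal_step -IH; apply: eq_bigr => g _.
rewrite big_distrr; apply: eq_bigr => y _.
by rewrite path_weight_extend path_at_extend_last -mulrA.
Qed.

Lemma sum_paths_marginal mu K n m (h : X -> R) : (m <= n)%N ->
  (forall t x, (m <= t < n)%N -> \sum_y K t x y = 1) ->
  \sum_(f : {ffun 'I_n.+1 -> X}) path_weight mu K n (path_at f) * h (path_at f m)
  = \sum_x marginal mu K m x * h x.
Proof.
elim: n => [|n IH] hm stoch.
  by move: hm; rewrite leqn0 => /eqP ->; exact: sum_paths_last.
move: hm; rewrite leq_eqVlt => /orP[/eqP->|]; first exact: sum_paths_last.
rewrite ltnS => hm.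
rewrite sum_paths_extend -IH // => [|t x /andP[mt tn]]; last by apply: stoch; rewrite mt ltnW.
apply: eq_bigr => g _.
under eq_bigr do rewrite path_weight_extend (path_at_extend _ _ _ _ hm) mulrAC.
by rewrite -big_distrr /= stoch ?mulr1 // hm ltnSn.
Qed.

Lemma marginal_lumped (Y : Type) (pr : X -> Y) (mu1 mu2 : X -> R)
    (K1 K2 : nat -> X -> X -> R) (Phi : (Y -> R) -> Y -> R) m :
  (forall h, \sum_x mu1 x * h (pr x) = \sum_x mu2 x * h (pr x)) ->
  (forall t h x, (t < m)%N -> \sum_y K1 t x y * h (pr y) = Phi h (pr x)) ->
  (forall t h x, (t < m)%N -> \sum_y K2 t x y * h (pr y) = Phi h (pr x)) ->
  forall h, \sum_x marginal mu1 K1 m x * h (pr x) = \sum_x marginal mu2 K2 m x * h (pr x).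
Proof.
elim: m => [|m IH] init step1 step2 h //.
rewrite !(marginal_step _ _ _ (h \o pr)) /=.
under eq_bigr do rewrite (step1 m _ _ (ltnSn m)).
under [RHS]eq_bigr do rewrite (step2 m _ _ (ltnSn m)).
apply: IH => // t h' x /ltnW ht; [exact: step1 | exact: step2].
Qed.

End Chains.

Arguments path_at {X n}.
Arguments path_weight {R X}.
Arguments marginal {R X}.
Arguments sum_paths_marginal {R X}.
Arguments marginal_lumped {R X Y}.

Section IidAverage.
Variable R : fieldType.

Lemma expectation_iid_average (Y : finType) N M (P : Y -> R) (G : 'I_M -> Y -> R) :
  N%:R != 0 :> R -> \sum_y P y = 1 ->
  \sum_(g : {ffun 'I_N -> Y}) (\prod_n P (g n)) * (N%:R^-1 * \sum_(n < N) \sum_(t < M) G t (g n))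
  = \sum_(t < M) \sum_y P y * G t y.
Proof.
move=> N_neq0 P_mass1.
have one_sample (t : 'I_M) (n : 'I_N) :
    \sum_(g : {ffun 'I_N -> Y}) (\prod_n P (g n)) * G t (g n) = \sum_y P y * G t y.
  exact: (@marginal_product R 'I_N (fun _ => Y) (fun _ => P) n (G t)).
transitivity (N%:R^-1 * \sum_(n < N) \sum_(t < M) \sum_y P y * G t y); last first.
  by rewrite sumr_const card_ord -(mulr_natl (\sum_(t < M) _)) mulrA mulVf ?mul1r.
under eq_bigr do rewrite mulrCA big_distrr.
rewrite -big_distrr /=; congr (_ * _).
rewrite exchange_big /=; apply: eq_bigr => n _.
under eq_bigr do rewrite big_distrr.
by rewrite exchange_big /=; apply: eq_bigr => t _; exact: one_sample.
Qed.

End IidAverage.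

Arguments expectation_iid_average {R Y N M}.

Section FactoredMDP.
Variables (R : realFieldType) (S : finType) (D : nat) (Ad Zd : 'I_D -> finType) (T : nat)
  (phi : S -> abstr Zd) (p : S -> action Ad -> S -> R) (d1 : S -> R)
  (pib pie : S -> action Ad -> R) (pibd pied : forall d : 'I_D, Zd d -> Ad d -> R)
  (pd : forall d : 'I_D, Zd d -> Ad d -> Zd d -> R).
Hypotheses (p_distr : forall s a, is_distr (p s a)) (d1_distr : is_distr d1)
  (pd_distr : forall d z a, is_distr (pd d z a))
  (p_factor : forall s s' a, \sum_(s2 | phi s2 == phi s') p s a s2
                            = \prod_(d < D) pd d (phi s d) (a d) (phi s' d))
  (pibd_distr : forall d z, is_distr (pibd d z))
  (pied_distr : forall d z, is_distr (pied d z))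
  (pib_factor : forall s a, pib s a = \prod_(d < D) pibd d (phi s d) (a d))
  (pie_factor : forall s a, pie s a = \prod_(d < D) pied d (phi s d) (a d))
  (abs_cont : forall d z a, pibd d z a = 0 -> pied d z a = 0).

Local Notation X := (S * action Ad)%type.

(* (P) only constrains abstract states in the image of phi; since both sides
   are probability distributions on abstract states, it extends to all of them
   (the left side vanishes off the image, and mass one forces the right too). *)
Lemma lumped_transition s a z :
  \sum_(s2 | phi s2 == z) p s a s2 = \prod_j pd j (phi s j) (a j) (z j).
Proof.
pose E z' := \sum_(s2 | phi s2 == z') p s a s2.
pose Q (z' : abstr Zd) := \prod_j pd j (phi s j) (a j) (z' j).
have on_image z' s2 : phi s2 = z' -> E z' = Q z' by move=> <-; exact: p_factor.
have [s2 /eqP/on_image //|_] := pickP (fun s2 => phi s2 == z).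
have E_le_Q z' : 0 <= Q z' - E z'.
  have [s2 /eqP/on_image->|none] := pickP (fun s2 => phi s2 == z'); first by rewrite subrr.
  rewrite /E big_pred0 // subr0.
  by apply: prodr_ge0 => j _; case: (pd_distr j (phi s j) (a j)).
have E_mass : \sum_z' E z' = 1.
  by case: (p_distr s a) => _ <-; rewrite (partition_big phi xpredT).
have Q_mass : \sum_z' Q z' = 1.
  rewrite /Q -(big_dffun_distr (fun j x => pd j (phi s j) (a j) x)).
  by apply: big1 => j _; case: (pd_distr j (phi s j) (a j)).
have /psumr_eq0P/(_ z isT) : \sum_z' (Q z' - E z') = 0.
  by rewrite sumrB Q_mass E_mass subrr.
by move=> /(_ (fun z' _ => E_le_Q z'))/eqP; rewrite subr_eq0 eq_sym => /eqP.
Qed.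

Lemma transition_marginal d (g : Zd d -> R) s a :
  \sum_s' p s a s' * g (phi s' d) = \sum_z pd d (phi s d) (a d) z * g z.
Proof.
rewrite (partition_big phi xpredT) //=.
transitivity (\sum_(z : abstr Zd) (\prod_j pd j (phi s j) (a j) (z j)) * g (z d)).
  apply: eq_bigr => z _; rewrite -lumped_transition big_distrl /=.
  by apply: eq_bigr => s' /eqP <-.
apply: (marginal_product (fun j x => pd j (phi s j) (a j) x)) => j _.
by case: (pd_distr j (phi s j) (a j)).
Qed.

Lemma policy_mass_one (pi : S -> action Ad -> R) (f : forall j, Zd j -> Ad j -> R) :
  (forall j z, is_distr (f j z)) ->
  (forall s a, pi s a = \prod_(d < D) f d (phi s d) (a d)) ->
  forall s, \sum_(a : action Ad) pi s a = 1.
Proof.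
move=> f_distr pi_factor s.
under eq_bigr do rewrite pi_factor.
rewrite -(big_dffun_distr (fun j x => f j (phi s j) x)).
by apply: big1 => j _; case: (f_distr j (phi s j)).
Qed.

Lemma policy_marginal (f : forall j, Zd j -> Ad j -> R) (z : abstr Zd) d (g : Ad d -> R) :
  (forall j z, is_distr (f j z)) ->
  \sum_(a : action Ad) (\prod_j f j (z j) (a j)) * g (a d) = \sum_a f d (z d) a * g a.
Proof.
by move=> f_distr; apply: (marginal_product (fun j x => f j (z j) x)) => j _; case: (f_distr j (z j)).
Qed.

Lemma next_pair_marginal (f : forall j, Zd j -> Ad j -> R) d (g : Zd d -> Ad d -> R) s a :
  (forall j z, is_distr (f j z)) ->
  \sum_(y : X) p s a y.1 * (\prod_j f j (phi y.1 j) (y.2 j)) * g (phi y.1 d) (y.2 d)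
  = \sum_z pd d (phi s d) (a d) z * \sum_a' f d z a' * g z a'.
Proof.
move=> f_distr; rewrite -(pair_bigA _ (fun s' (a' : action Ad) =>
   p s a s' * (\prod_j f j (phi s' j) (a' j)) * g (phi s' d) (a' d))) /=.
rewrite -(transition_marginal d (fun z => \sum_a' f d z a' * g z a')).
apply: eq_bigr => s' _; rewrite -(policy_marginal f (phi s') d (g (phi s' d)) f_distr).
by rewrite big_distrr /=; apply: eq_bigr => a' _; rewrite mulrA.
Qed.

Definition step_ratio d (x : X) : R :=
  pied d (phi x.1 d) (x.2 d) / pibd d (phi x.1 d) (x.2 d).

Definition ratio_upto d k t (x : X) : R := if (t <= k)%N then step_ratio d x else 1.

Definition no_weight (t : nat) (x : X) : R := 1.

Definition chain_init (pi : S -> action Ad -> R) (wt : nat -> X -> R) (x : X) : R :=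
  d1 x.1 * pi x.1 x.2 * wt 0%N x.
Definition chain_kernel (pi : S -> action Ad -> R) (wt : nat -> X -> R) t (x y : X) : R :=
  p x.1 x.2 y.1 * pi y.1 y.2 * wt t.+1 y.

Definition lump d (x : X) : Zd d * Ad d := (phi x.1 d, x.2 d).

Definition lumped_step d (h : Zd d * Ad d -> R) (za : Zd d * Ad d) : R :=
  \sum_z pd d za.1 za.2 z * \sum_a pied d z a * h (z, a).

Lemma traj_prob_weighted (pi : S -> action Ad -> R) (wt : nat -> X -> R) (tau : traj S Ad T) :
  traj_prob d1 p pi tau * \prod_(t < T.+1) wt t (path_at tau t)
  = path_weight (chain_init pi wt) (chain_kernel pi wt) T (path_at tau).
Proof.
rewrite /traj_prob /path_weight /chain_init /chain_kernel !big_split /=.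
rewrite !big_ord_recl /st /ac /path_at /=.
ring.
Qed.

Lemma rho_ratio_upto d k (tau : traj S Ad T) : (k <= T)%N ->
  rho phi pied pibd d tau k = \prod_(t < T.+1) ratio_upto d k t (path_at tau t).
Proof.
move=> kT; transitivity (\prod_(t < k.+1) step_ratio d (path_at tau t)); first by [].
rewrite (big_ord_widen T.+1 (fun t => step_ratio d (path_at tau t)) (kT : (k < T.+1)%N)).
rewrite big_mkcond /=.
by apply: eq_bigr => t _; rewrite /ratio_upto ltnS.
Qed.

(* (AC): reweighting the behaviour policy by the ratio gives the evaluation
   policy, also where the behaviour probability vanishes. *)
Lemma ratio_cancel d z a v : pibd d z a * (pied d z a / pibd d z a * v) = pied d z a * v.
Proof.
have [b0|b_neq0] := eqVneq (pibd d z a) 0; first by rewrite b0 abs_cont // !mul0r.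
by rewrite mulrA mulrCA mulfV // mulr1.
Qed.

Lemma step_behaviour d k t h x : (t < k)%N ->
  \sum_y chain_kernel pib (ratio_upto d k) t x y * h (lump d y) = lumped_step d h (lump d x).
Proof.
move=> tk.
transitivity (\sum_(y : X) p x.1 x.2 y.1 * (\prod_j pibd j (phi y.1 j) (y.2 j)) *
   (fun z a => pied d z a / pibd d z a * h (z, a)) (phi y.1 d) (y.2 d)).
  by apply: eq_bigr => y _; rewrite /chain_kernel /ratio_upto tk pib_factor -!mulrA.
rewrite (next_pair_marginal pibd d (fun z a => pied d z a / pibd d z a * h (z, a))) //.
apply: eq_bigr => z _; congr (_ * _).
by apply: eq_bigr => a _; rewrite ratio_cancel.
Qed.

Lemma step_evaluation d t h x :
  \sum_y chain_kernel pie no_weight t x y * h (lump d y) = lumped_step d h (lump d x).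
Proof.
rewrite /lumped_step -(next_pair_marginal pied d (fun z a => h (z, a))) //.
by apply: eq_bigr => y _; rewrite /chain_kernel /no_weight pie_factor mulr1.
Qed.

Lemma init_agree d k h :
  \sum_x chain_init pib (ratio_upto d k) x * h (lump d x)
  = \sum_x chain_init pie no_weight x * h (lump d x).
Proof.
rewrite -(pair_bigA _ (fun s a => chain_init pib (ratio_upto d k) (s, a) * h (lump d (s, a)))).
rewrite -(pair_bigA _ (fun s a => chain_init pie no_weight (s, a) * h (lump d (s, a)))).
apply: eq_bigr => s _.
transitivity (d1 s * \sum_(a : action Ad) (\prod_j pibd j (phi s j) (a j)) *
   (fun a' => pied d (phi s d) a' / pibd d (phi s d) a' * h (phi s d, a')) (a d)).
  rewrite big_distrr; apply: eq_bigr => a _.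
  by rewrite /chain_init /ratio_upto leq0n pib_factor -!mulrA.
transitivity (d1 s * \sum_(a : action Ad) (\prod_j pied j (phi s j) (a j)) * h (phi s d, a d)).
  rewrite (policy_marginal pibd (phi s) d
    (fun a' => pied d (phi s d) a' / pibd d (phi s d) a' * h (phi s d, a'))) //.
  rewrite (policy_marginal pied (phi s) d (fun a' => h (phi s d, a'))) //; congr (_ * _).
  by apply: eq_bigr => a _; rewrite ratio_cancel.
rewrite big_distrr; apply: eq_bigr => a _.
by rewrite /chain_init /no_weight pie_factor mulr1 -mulrA.
Qed.

Lemma lumped_step_one d za : lumped_step d (fun _ => 1) za = 1.
Proof.
rewrite /lumped_step -[RHS](proj2 (pd_distr d za.1 za.2)); apply: eq_bigr => z _.
under eq_bigr do rewrite mulr1.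
by case: (pied_distr d z) => _ ->; rewrite mulr1.
Qed.

Lemma kernel_stochastic (pi : S -> action Ad -> R) (wt : nat -> X -> R) t (x : X) :
  (forall s, \sum_a pi s a = 1) -> (forall y, wt t.+1 y = 1) ->
  \sum_(y : X) chain_kernel pi wt t x y = 1.
Proof.
move=> pi_mass wt1.
rewrite /chain_kernel; under eq_bigr do rewrite wt1 mulr1.
rewrite -(pair_bigA _ (fun s (a : action Ad) => p x.1 x.2 s * pi s a)) /=.
case: (p_distr x.1 x.2) => _ <-; apply: eq_bigr => s _.
by rewrite -big_distrr /= pi_mass mulr1.
Qed.

(* The reweighted behaviour kernel stays stochastic: before time k because the
   ratios average to one under pi_b^d, afterwards since it is unweighted. *)
Lemma behaviour_kernel_stochastic d k t x :
  \sum_y chain_kernel pib (ratio_upto d k) t x y = 1.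
Proof.
have [tk|kt] := ltnP t k.
  rewrite -[RHS](lumped_step_one d (lump d x)) -(step_behaviour d k t (fun _ => 1) x tk).
  by under [RHS]eq_bigr do rewrite mulr1.
apply: kernel_stochastic => [|y]; first exact: policy_mass_one pib pibd pibd_distr pib_factor.
by rewrite /ratio_upto ltnNge kt.
Qed.

Lemma traj_mass_one (pi : S -> action Ad -> R) (f : forall j, Zd j -> Ad j -> R) :
  (forall j z, is_distr (f j z)) ->
  (forall s a, pi s a = \prod_(d < D) f d (phi s d) (a d)) ->
  \sum_(tau : traj S Ad T) traj_prob d1 p pi tau = 1.
Proof.
move=> f_distr pi_factor; have pi_mass := policy_mass_one pi f f_distr pi_factor.
transitivity (\sum_(tau : traj S Ad T)
  path_weight (chain_init pi no_weight) (chain_kernel pi no_weight) T (path_at tau)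
  * (fun _ => 1) (path_at tau 0)).
  by apply: eq_bigr => tau _; rewrite -traj_prob_weighted big1 ?mulr1.
rewrite (sum_paths_marginal _ _ T 0 (fun _ => 1) (leq0n T)) => [|t x _]; last exact: kernel_stochastic.
under eq_bigr do rewrite /= /chain_init /no_weight !mulr1.
rewrite -(pair_bigA _ (fun s (a : action Ad) => d1 s * pi s a)) /=.
case: d1_distr => _ <-; apply: eq_bigr => s _.
by rewrite -big_distrr /= pi_mass mulr1.
Qed.

(* Both chains lump onto the same chain of the d-th
   factor up to time t. *)
Lemma importance_weighting d k t (g : Zd d -> Ad d -> R) : (t <= k)%N -> (k <= T)%N ->
  \sum_(tau : traj S Ad T) traj_prob d1 p pib tau
    * (rho phi pied pibd d tau k * g (phi (st tau t) d) (ac tau t d))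
  = \sum_(tau : traj S Ad T) traj_prob d1 p pie tau * g (phi (st tau t) d) (ac tau t d).
Proof.
move=> tk kT; have tT := leq_trans tk kT.
pose h (za : Zd d * Ad d) := g za.1 za.2.
transitivity (\sum_(tau : traj S Ad T)
  path_weight (chain_init pib (ratio_upto d k)) (chain_kernel pib (ratio_upto d k)) T (path_at tau)
  * (h \o lump d) (path_at tau t)).
  by apply: eq_bigr => tau _; rewrite -traj_prob_weighted -rho_ratio_upto // mulrA.
transitivity (\sum_(tau : traj S Ad T)
  path_weight (chain_init pie no_weight) (chain_kernel pie no_weight) T (path_at tau)
  * (h \o lump d) (path_at tau t)); last first.
  by apply: eq_bigr => tau _; rewrite -traj_prob_weighted big1 ?mulr1.
rewrite !(sum_paths_marginal _ _ _ _ _ tT) => [|t' x _|t' x _]; last first.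
- exact: behaviour_kernel_stochastic.
- exact: kernel_stochastic (policy_mass_one pie pied pied_distr pie_factor) _.
apply: (marginal_lumped (lump d) _ _ _ _ (lumped_step d)) => [|t' h' x|t' h' x] *.
- exact: init_agree.
- by apply: step_behaviour; apply: leq_trans tk.
- exact: step_evaluation.
Qed.

Lemma value_decomposed (r : S -> action Ad -> R) (rd : forall d : 'I_D, Zd d -> Ad d -> R)
    (gamma : R) :
  (forall s a, r s a = \sum_(d < D) rd d (phi s d) (a d)) ->
  value T d1 p pie r gamma = \sum_(d < D) \sum_(t < T.+1) gamma ^+ t *
     \sum_(tau : traj S Ad T) traj_prob d1 p pie tau * rd d (phi (st tau t) d) (ac tau t d).
Proof.
move=> r_factor; rewrite /value /Etraj.
transitivity (\sum_(tau : traj S Ad T) \sum_(t < T.+1) \sum_(d < D)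
   gamma ^+ t * (traj_prob d1 p pie tau * rd d (phi (st tau t) d) (ac tau t d))).
  apply: eq_bigr => tau _; rewrite big_distrr /=; apply: eq_bigr => t _.
  by rewrite r_factor !big_distrr /=; apply: eq_bigr => d _; rewrite mulrCA.
rewrite exchange_big /=; under eq_bigr do rewrite exchange_big /=.
rewrite exchange_big /=; apply: eq_bigr => d _; apply: eq_bigr => t _.
by rewrite big_distrr.
Qed.

(* Expectation of the decomposed estimators with truncation times kk t, with
   t <= kk t <= T (kk t = T for DecIS, kk t = t for DecPDIS). *)
Lemma estimator_expectation N (rd : forall d : 'I_D, Zd d -> Ad d -> R) (gamma : R)
    (kk : 'I_T.+1 -> nat) :
  (forall t : 'I_T.+1, t <= kk t <= T)%N -> (0 < N)%N ->
  @Edata R S D Ad T N d1 p pib (fun data => \sum_(d < D) N%:R^-1 * \sum_(n < N) \sum_(t < T.+1)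
     gamma ^+ t * rho phi pied pibd d (data n) (kk t)
       * rd d (phi (st (data n) t) d) (ac (data n) t d))
  = \sum_(d < D) \sum_(t < T.+1) gamma ^+ t *
     \sum_(tau : traj S Ad T) traj_prob d1 p pie tau * rd d (phi (st tau t) d) (ac tau t d).
Proof.
move=> kk_range N_gt0.
have N_neq0 : N%:R != 0 :> R by rewrite pnatr_eq0 -lt0n.
rewrite /Edata; under eq_bigr do rewrite big_distrr /=.
rewrite exchange_big /=; apply: eq_bigr => d _.
rewrite (expectation_iid_average _ (fun (t : 'I_T.+1) (tau : traj S Ad T) => gamma ^+ t * rho phi pied pibd d tau (kk t)
   * rd d (phi (st tau t) d) (ac tau t d)) N_neq0 (traj_mass_one pib pibd pibd_distr pib_factor)).
apply: eq_bigr => t _; have /andP[tk kT] := kk_range t.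
rewrite -(importance_weighting d (kk t) t (rd d) tk kT) big_distrr /=.
by apply: eq_bigr => tau _; rewrite -mulrA mulrCA.
Qed.

End FactoredMDP.

Arguments estimator_expectation {R S D Ad Zd T phi p d1 pib pie pibd pied pd}.
Arguments value_decomposed {R S D Ad Zd T phi p d1 pie r rd gamma}.

Theorem theorem2 (R : realFieldType) (S : finType) (D : nat)
  (Ad Zd : 'I_D -> finType) (T N : nat)
  (phi : S -> abstr Zd)
  (p : S -> action Ad -> S -> R) (r : S -> action Ad -> R)
  (d1 : S -> R) (gamma : R)
  (pib pie : S -> action Ad -> R)
  (pibd pied : forall d : 'I_D, Zd d -> Ad d -> R)
  (rd : forall d : 'I_D, Zd d -> Ad d -> R)
  (pd : forall d : 'I_D, Zd d -> Ad d -> Zd d -> R) :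
  (* MDP well-formedness *)
  (forall s a, is_distr (p s a)) ->
  is_distr d1 ->
  0 <= gamma <= 1 ->
  (0 < N)%N ->
  (* (R) reward decomposition *)
  (forall s a, r s a = \sum_(d < D) rd d (phi s d) (a d)) ->
  (* (P) transition factorisation with sub-transition kernels p^d *)
  (forall d z a, is_distr (pd d z a)) ->
  (forall s s' a, \sum_(s2 | phi s2 == phi s') p s a s2
                  = \prod_(d < D) pd d (phi s d) (a d) (phi s' d)) ->
  (* (F) factored behaviour and evaluation policies *)
  (forall d z, is_distr (pibd d z)) ->
  (forall d z, is_distr (pied d z)) ->
  (forall s a, pib s a = \prod_(d < D) pibd d (phi s d) (a d)) ->
  (forall s a, pie s a = \prod_(d < D) pied d (phi s d) (a d)) ->
  (* (AC) factor-wise absolute continuity *)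
  (forall d z a, pibd d z a = 0 -> pied d z a = 0) ->
  @Edata R S D Ad T N d1 p pib (@QDecIS R S D Ad Zd T N phi pied pibd rd gamma) = value T d1 p pie r gamma /\
  @Edata R S D Ad T N d1 p pib (@QDecPDIS R S D Ad Zd T N phi pied pibd rd gamma) = value T d1 p pie r gamma.
Proof.
move=> p_distr d1_distr _ N_gt0 r_factor pd_distr p_factor pibd_distr pied_distr
  pib_factor pie_factor abs_cont.
have expectation := estimator_expectation (T := T) p_distr d1_distr pd_distr p_factor
  pibd_distr pied_distr pib_factor pie_factor abs_cont N rd gamma.
rewrite (value_decomposed r_factor).
split.
-
  by apply: (expectation (fun _ => T)) => // t; rewrite leqnn andbT -ltnS.
-
  by apply: (expectation (fun t => t)) => // t; rewrite leqnn -ltnS /=.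
Qed.
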